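(* For $\epsilon\in(0,1)$ and every $x\in\{0,1\}^n$ with Hamming weight $|x|\in[n/2,\,n/2+0.05\,\epsilon\sqrt n]$, if $\mathbf T\sim\mathsf{Talagrand}(n,\epsilon)$ then $\Pr_{\mathbf T}\big[|S_{\mathbf T}(x)|=1\big]>0.03$.
   Context: $\mathsf{Talagrand}(n,\epsilon)$ is the following distribution: let $L=0.1\cdot 2^{\sqrt n/\epsilon}$; independently for each $i=1,\dots,L$, draw a set $\mathbf T_i\subseteq[n]$ by choosing $\sqrt n/\epsilon$ elements of $[n]$ independently and uniformly with replacement (quantities are assumed/rounded to be integers). For $T=(T_1,\dots,T_L)$ and $x\in\{0,1\}^n$, $T_\ell(x)=1$ iff $x_j=1$ for all $j\in T_\ell$, and $S_T(x)=\{\ell\in[L]:T_\ell(x)=1\}$. $|x|$ denotes the number of ones in $x$. *)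

From HB Require Import structures.
From mathcomp Require Import all_boot all_order all_algebra.
From mathcomp Require Import reals.
Set Implicit Arguments. Unset Strict Implicit. Unset Printing Implicit Defensive.
Import Order.TTheory GRing.Theory Num.Theory.
Local Open Scope ring_scope.

Definition talK (R : realType) (n : nat) (eps : R) : nat :=
  `|Num.ceil (Num.sqrt (n%:R) / eps)|%N.

Definition talL (R : realType) (k : nat) : nat :=
  `|Num.ceil ((10%:R : R)^-1 * 2%:R ^+ k)|%N.

(* A sample T = (T_1,...,T_L); T_l is given by the k indices drawn
   independently and uniformly with replacement from [n] = 'I_n.  The
   set T_l is the set of drawn indices. *)
Definition talSample (L k n : nat) := {ffun 'I_L -> {ffun 'I_k -> 'I_n}}.

Definition talT (L k n : nat) (T : talSample L k n) (l : 'I_L)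
  (x : {ffun 'I_n -> bool}) : bool :=
  [forall j : 'I_k, x (T l j)].

Definition talS (L k n : nat) (T : talSample L k n) (x : {ffun 'I_n -> bool})
  : {set 'I_L} :=
  [set l | talT T l x].

Definition hweight (n : nat) (x : {ffun 'I_n -> bool}) : nat := #|[set i | x i]|.

(* Pr_{T ~ Talagrand(n,eps)} [ |S_T(x)| = 1 ] : the sample space is uniform
   over all (L*k)-tuples of indices in [n]. *)
Definition talProbS1 (R : realType) (n : nat) (eps : R) (x : {ffun 'I_n -> bool}) : R :=
  let k := talK n eps in
  let L := talL R k in
  (#|[set T : talSample L k n | #|talS T x| == 1%N]|%:R)
    / (#|[set: talSample L k n]|%:R).

From HB Require Import structures.
From mathcomp Require Import all_boot all_order all_algebra.
From mathcomp Require Import reals.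
From mathcomp Require Import ring lra.
Set Implicit Arguments. Unset Strict Implicit. Unset Printing Implicit Defensive.
Import Order.TTheory GRing.Theory Num.Theory.

(* The L sets are independent and each T_l(x) = 1 with probability
   q = (|x|/n)^k, so |S_T(x)| is binomial and Pr[|S_T(x)| = 1] = L q (1-q)^(L-1).
   The choices k = ceil(sqrt n / eps), L = ceil(2^k / 10) and the bound on |x|
   give 1 <= (2|x|/n)^k <= (1 + eps/(10 sqrt n))^k <= 5/4, hence
   1/10 <= L q <= 7/16, and Bernoulli's inequality
   L q (1-q)^(L-1) >= L q (1 - L q) then yields the bound 0.03. *)

Section ExactlyOneHit.
Variables (A : finType) (G : {set A}) (L : nat).

Definition hits (T : {ffun 'I_L -> A}) : {set 'I_L} := [set l | T l \in G].

Definition hits_only (l : 'I_L) (l' : 'I_L) : pred A :=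
  [pred a | (a \in G) == (l' == l)].

Lemma family_hits_only (T : {ffun 'I_L -> A}) (l : 'I_L) :
  (T \in family (hits_only l)) = (hits T == [set l]).
Proof.
apply/forallP/eqP => [hit_only|hitsT l'].
  by apply/setP => l'; rewrite !inE -(eqP (hit_only l')).
by rewrite /= inE -[l' == l]in_set1 -hitsT inE.
Qed.

Lemma card_family_hits_only (l : 'I_L) :
  #|family (hits_only l)| = (#|G| * #|~: G| ^ L.-1)%N.
Proof.
rewrite card_family foldrE big_map big_enum /= (bigD1 l) //=.
rewrite (eq_bigr (fun _ => #|~: G|)) => [|l' /negbTE l'l]; last first.
  by apply: eq_card => a; rewrite !inE l'l; case: (a \in G).
rewrite (eq_bigl (predC1 l)) // prod_nat_const cardC1 card_ord.
by congr (_ * _)%N; apply: eq_card => a; rewrite !inE eqxx; case: (a \in G).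
Qed.

Lemma sum_eq_set1 (S : {set 'I_L}) : (\sum_l (S == [set l]) = (#|S| == 1))%N.
Proof.
case: (@cards1P _ S) => [[l0 ->]|noS1].
  rewrite (bigD1 l0) //= eqxx big1 // => l /negbTE l0l.
  by rewrite eq_sym eqEcard sub1set in_set1 l0l.
by rewrite big1 // => l; case: eqP => // S1; case: noS1; exists l.
Qed.

Lemma card_hits_eq1 :
  #|[set T | #|hits T| == 1%N]| = (L * (#|G| * #|~: G| ^ L.-1))%N.
Proof.
rewrite -sum1_card big_mkcond /=.
rewrite (eq_bigr (fun T => \sum_l (T \in family (hits_only l)) : nat)%N); last first.
  move=> T _; under eq_bigr => l _ do rewrite family_hits_only.
  by rewrite sum_eq_set1 inE; case: (_ == 1%N).
rewrite exchange_big /= (eq_bigr (fun _ => #|G| * #|~: G| ^ L.-1)%N).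
  by rewrite sum_nat_const card_ord.
move=> l _; rewrite -(card_family_hits_only l) -sum1_card [RHS]big_mkcond.
by apply: eq_bigr => T _; case: (T \in _).
Qed.

End ExactlyOneHit.

Local Open Scope ring_scope.

Lemma prob_hits_eq1 (R : numFieldType) (A : finType) (G : {set A}) (L : nat) :
  let q : R := #|G|%:R / #|A|%:R in
  #|[set T : {ffun 'I_L -> A} | #|hits G T| == 1%N]|%:R / #|[set: {ffun 'I_L -> A}]|%:R
    = L%:R * q * (1 - q) ^+ L.-1.
Proof.
move=> q; rewrite card_hits_eq1 cardsT card_ffun card_ord.
have -> : #|~: G| = (#|A| - #|G|)%N by rewrite -(cardsC G) addKn.
case: L => [|L]; first by rewrite !mul0r.
case: (posnP #|G|) => G0; first by rewrite /q G0 !(mul0n, muln0, mul0r, mulr0).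
rewrite /= !natrM !natrX natrB ?max_card // /q.
set N : R := #|A|%:R; set g : R := #|G|%:R.
have N0 : N != 0 by rewrite pnatr_eq0 -lt0n (leq_trans G0) ?max_card.
have -> : 1 - g / N = (N - g) / N by field.
by rewrite expr_div_n exprS; field; rewrite expf_neq0.
Qed.

Definition ones_tuples (n k : nat) (x : {ffun 'I_n -> bool}) : {set {ffun 'I_k -> 'I_n}} :=
  [set f : {ffun 'I_k -> 'I_n} | [forall j, x (f j)]].

Lemma talS_hits (L k n : nat) (T : talSample L k n) (x : {ffun 'I_n -> bool}) :
  talS T x = hits (ones_tuples k x) T.
Proof. by apply/setP => l; rewrite !inE. Qed.

Lemma card_ones_tuples (n k : nat) (x : {ffun 'I_n -> bool}) :
  #|ones_tuples k x| = (hweight x ^ k)%N.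
Proof.
rewrite -[in RHS](card_ord k) -card_ffun_on; apply: eq_card => f.
by rewrite inE; apply/forallP/forallP => fx j; move: (fx j); rewrite ?inE.
Qed.

Lemma talProbS1E (R : realType) (n : nat) (eps : R) (x : {ffun 'I_n -> bool}) :
  let k := talK n eps in let L := talL R k in
  let q : R := ((hweight x)%:R / n%:R) ^+ k in
  talProbS1 eps x = L%:R * q * (1 - q) ^+ L.-1.
Proof.
move=> k L q; rewrite /talProbS1 -/k -/L.
have -> : [set T : talSample L k n | #|talS T x| == 1%N]
         = [set T | #|hits (ones_tuples k x) T| == 1%N].
  by apply/setP => T; rewrite !inE talS_hits.
by rewrite prob_hits_eq1 card_ones_tuples card_ffun !card_ord !natrX -expr_div_n.
Qed.

Section RealBounds.
Variable R : realFieldType.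
Implicit Types (a q r : R) (k L m : nat).

Lemma bernoulli_ineq m q : 0 <= q <= 1 -> 1 - m%:R * q <= (1 - q) ^+ m.
Proof.
move=> /andP[q0 q1]; elim: m => [|m IHm]; first by rewrite mul0r subr0 expr0.
have q1' : 0 <= 1 - q by lra.
have := ler_wpM2l q1' IHm; have : 0 <= m%:R * q * q by rewrite !mulr_ge0.
by rewrite exprS -addn1 natrD; nra.
Qed.

Lemma expr1D_mul_le1 a k : 0 <= a <= 1 -> (1 + a) ^+ k * (1 - k%:R * a) <= 1.
Proof.
move=> /andP[a0 a1]; have Da : 0 <= (1 + a) ^+ k by rewrite exprn_ge0 //; lra.
apply: le_trans (ler_wpM2l Da (bernoulli_ineq k _)) _; first lra.
by rewrite -exprMn exprn_ile1 //; nra.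
Qed.

(* Bernoulli gives L q (1-q)^(L-1) >= L q (1 - L q), a parabola in L q
   that exceeds 0.03 on [1/10, 7/16]. *)
Lemma exactly_one_gt L q : 0 <= q -> 1/10 <= L%:R * q <= 7/16 ->
  3 / 100 < L%:R * q * (1 - q) ^+ L.-1.
Proof.
move=> q0 /andP[lo hi].
have L1 : (1 <= L)%N by rewrite lt0n; apply: contraTneq lo => ->; rewrite mul0r; lra.
have q1 : q <= 1.
  have L1R : 1 <= L%:R :> R by rewrite ler1n.
  nra.
have hb := @bernoulli_ineq L.-1 q; rewrite q0 q1 /= in hb.
have : (L.-1)%:R * q <= L%:R * q by rewrite ler_wpM2r // ler_nat leq_pred.
set v := _ ^+ _ in hb *; set u := L%:R * q in lo hi * => Lu.
have : 0 <= (u - 1/10) * (v - 9/16) by apply: mulr_ge0; lra.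
nra.
Qed.

(* L r^k = (L / 2^k) (2r)^k with L / 2^k in [1/10, 7/20] and (2r)^k in [1, 5/4]. *)
Lemma mean_hits_bounds r a k L : 1/2 <= r <= (1 + a)/2 -> 0 <= a ->
  k%:R * a <= 1/5 -> (2 <= k)%N -> 2 ^+ k / 10 <= (L%:R : R) < 2 ^+ k / 10 + 1 ->
  1/10 <= L%:R * r ^+ k <= 7/16.
Proof.
move=> /andP[r1 r2] a0 ka k2 /andP[L1 L2].
have P4 : 4 <= 2 ^+ k :> R.
  by have := k2; rewrite -(ler_eXn2l (ltr1n R 2)) expr2; lra.
have a1 : a <= 1.
  have : 2 <= k%:R :> R by rewrite (ler_nat R 2).
  nra.
have lo : 1 <= 2 ^+ k * r ^+ k by rewrite -exprMn exprn_ege1 //; lra.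
have hi : 2 ^+ k * r ^+ k <= 5/4.
  have Da : (1 + a) ^+ k * (1 - k%:R * a) <= 1 by rewrite expr1D_mul_le1 ?a0.
  have D0 : 0 <= (1 + a) ^+ k by rewrite exprn_ge0 //; lra.
  have : (2 * r) ^+ k <= (1 + a) ^+ k by rewrite lerXn2r ?nnegrE //; lra.
  rewrite exprMn; nra.
have : 0 <= r ^+ k by rewrite exprn_ge0 //; lra.
nra.
Qed.

End RealBounds.

Lemma absz_ceil_bounds (R : archiRealFieldType) (y : R) : 0 <= y ->
  y <= (`|Num.ceil y|%N)%:R < y + 1.
Proof.
move=> y0; have c0 : 0 <= Num.ceil y by rewrite ceil_ge0; lra.
rewrite natr_absz ger0_norm //; have := ceil_itv y; rewrite intrB.
by move=> /andP[lo hi]; apply/andP; split => //; lra.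
Qed.

Section Talagrand.
Variables (R : realType) (n : nat) (eps : R).
Let s : R := Num.sqrt n%:R.
Let k := talK n eps.

Lemma sqrtn_ge1 : (0 < n)%N -> 1 <= s.
Proof. by move=> n0; rewrite -sqrtr1 ler_sqrt ?ler1n. Qed.

Lemma talK_bounds : 0 < eps -> s / eps <= k%:R < s / eps + 1.
Proof. by move=> eps0; apply: absz_ceil_bounds; rewrite divr_ge0 ?sqrtr_ge0 ?ltW. Qed.

Lemma talK_ge2 : (0 < n)%N -> 0 < eps < 1 -> (2 <= k)%N.
Proof.
move=> n0 /andP[eps0 eps1]; have /andP[k1 _] := talK_bounds eps0.
have s1 := sqrtn_ge1 n0; have : s < s / eps by rewrite ltr_pdivlMr //; nra.
by rewrite -(ltr_nat R); lra.
Qed.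

Lemma talL_bounds : 2 ^+ k / 10 <= ((talL R k)%:R : R) < 2 ^+ k / 10 + 1.
Proof. by rewrite /talL mulrC; apply: absz_ceil_bounds; rewrite mulr_ge0 ?invr_ge0 ?exprn_ge0. Qed.

Lemma talagrand_mean_bounds (w : nat) : (0 < n)%N -> 0 < eps < 1 ->
  n%:R / 2 <= (w%:R : R) <= n%:R / 2 + 5 / 100 * eps * s ->
  1/10 <= (talL R k)%:R * (w%:R / n%:R : R) ^+ k <= 7/16.
Proof.
move=> n0 epsI /andP[w1 w2]; have /andP[eps0 eps1] := epsI.
have nR : (0 : R) < n%:R by rewrite ltr0n.
have s1 := sqrtn_ge1 n0; have /andP[k1 k2] := talK_bounds eps0.
have s0 : 0 < s by apply: lt_le_trans s1.
set a := eps / (10 * s).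
have a0 : 0 <= a by rewrite divr_ge0 ?ltW ?mulr_gt0.
have ka : k%:R * a <= 1/5.
  rewrite /a mulrA ler_pdivrMr ?mulr_gt0 //.
  rewrite -(ltr_pM2r eps0) mulrDl divfK ?gt_eqF // mul1r in k2.
  lra.
apply: mean_hits_bounds a0 ka (talK_ge2 n0 epsI) talL_bounds.
have wn : w%:R / n%:R * n%:R = w%:R :> R by rewrite divfK // gt_eqF.
have hE : (1 + a) / 2 * n%:R = n%:R / 2 + 5 / 100 * eps * s.
  have ss : s ^+ 2 = n%:R by rewrite sqr_sqrtr // ltW.
  by rewrite /a -ss; field; rewrite gt_eqF.
apply/andP; split; nra.
Qed.

End Talagrand.

Theorem mainTheorem4 (R : realType) (n : nat) (eps : R)
  (x : {ffun 'I_n -> bool}) :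
  (0 < n)%N ->
  0 < eps -> eps < 1 ->
  (n%:R / 2%:R : R) <= (hweight x)%:R ->
  (hweight x)%:R <= n%:R / 2%:R + (5%:R / 100%:R) * eps * Num.sqrt (n%:R) ->
  3%:R / 100%:R < @talProbS1 R n eps x.
Proof.
move=> n0 eps0 eps1 w1 w2; rewrite talProbS1E.
apply: exactly_one_gt; first by rewrite exprn_ge0 ?divr_ge0.
have epsI : 0 < eps < 1 by rewrite eps0 eps1.
by apply: talagrand_mean_bounds n0 epsI _; apply/andP.
Qed.
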